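(* Let $r\in\mathbb{N}$ with $r\ge2$, let $v\in\mathbb{YF}^{r,+}_\infty$, $\beta\in(0,1]$ and $k\in\mathbb{N}_0$. Then $$\lim_{m\to\infty}\sum_{w\in\overline{Q}(r,v,m,k)}\mu_{r,v,\beta}(w)=0,$$ where $\overline{Q}(r,v,m,k)=\{w\in\mathbb{YF}^r:\ |w|=m,\ e(w,v)<k\}$.
   Context: Fix $r\in\mathbb{N}$. Words and statistics. Consider finite words over $\{1_1,\dots,1_r,2\}$. A letter $1_i$ is a one with digit value $1$; $2$ is a two with digit value $2$. $\varepsilon$ is the empty word. For a word $x$, $|x|$ is the sum of digit values, $d(x)$ the number of twos. The graph $\mathbb{YF}^r$. It is the graded graph on all finite words, graded by $|\cdot|$. From $x$ there is a downward edge to every word obtained by one of two operations: (i) delete the leftmost one; (ii) replace a $2$ lying left of the leftmost one (any $2$ if there are no ones) by $1_i$, with arbitrary $i$. Path counts. $d_r(x,y)$ is the number of downward paths $y=y_n\to\dots\to y_m=x$ with $|y_i|=i$. Infinite words. $\mathbb{YF}^r_\infty$ is the set of left-infinite words $\dots\alpha_2\alpha_1$. Common suffixes. For words $w,v$, $e(w,v)$ is the number of ones in the longest common suffix of $w$ and $v$; $1_i$ and $1_j$ with $i\neq j$ are different letters. The function $g$. Write $x=\dots2\,1^{\beta_m}\,2\cdots2\,1^{\beta_1}\,2\,1^{\beta_0}$, where $1^\beta$ is a possibly empty block of $\beta$ ones. For $1\le j\le d(x)$ set $g(x,j)=\beta_0+\dots+\beta_{j-1}+2j-1$. The function $\pi$.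 Set $\pi(x)=\prod_{j:\,g(x,j)>1}\frac{g(x,j)-1}{g(x,j)}$ and $\mathbb{YF}^{r,+}_\infty=\{v\in\mathbb{YF}^r_\infty:\pi(v)>0\}$. Letterwise convergence. $v_n\to v$ letterwise means: for every $k$ and all large $n$, the last $k$ letters of $v_n$ coincide with the last $k$ letters of $v$. The measures $\mu_{r,v,\beta}$. For $v\in\mathbb{YF}^{r,+}_\infty$ and $\beta\in(0,1]$ there exist finite words $v_n\to v$ letterwise with $\pi(v_n)\to\beta\pi(v)$. For any such sequence and any $w\in\mathbb{YF}^r$, the limit $\lim_n d_r(\varepsilon,w)d_r(w,v_n)/d_r(\varepsilon,v_n)$ exists and depends only on $w,v,\beta$ (proved in the paper). It is denoted $\mu_{r,v,\beta}(w)$. *)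

From Stdlib Require Import Reals Lra Lia Arith List.
From Coquelicot Require Import Coquelicot.
Import ListNotations.
Open Scope R_scope.

(** Letters: [One i] is the letter 1_{i+1} (0-based index, valid iff i < r);
    [Two] is the letter 2. *)
Inductive letter : Set := One (i : nat) | Two.

Definition letter_eqb (a b : letter) : bool :=
  match a, b with
  | One i, One j => Nat.eqb i j
  | Two, Two => true
  | _, _ => false
  end.

Definition valid_letter (r : nat) (a : letter) : Prop :=
  match a with One i => (i < r)%nat | Two => True end.

(** Finite words are lists in READING order: the head is the leftmost letter,
    the last element is the rightmost letter alpha_1. *)
Definition word := list letter.

Definition valid_word (r : nat) (x : word) : Prop := forall a, List.In a x -> valid_letter r a.

Fixpoint word_eqb (x y : word) : bool :=
  match x, y with
  | [], [] => true
  | a :: x', b :: y' => letter_eqb a b && word_eqb x' y'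
  | _, _ => false
  end.

Definition digit (a : letter) : nat := match a with One _ => 1 | Two => 2 end.

Definition size (x : word) : nat := fold_right (fun a s => (digit a + s)%nat) 0%nat x.

Definition is_one (a : letter) : bool := match a with One _ => true | Two => false end.

Fixpoint del_leftmost_one (x : word) : option word :=
  match x with
  | [] => None
  | One _ :: x' => Some x'
  | Two :: x' => option_map (cons Two) (del_leftmost_one x')
  end.

(** Operation (ii): replace a 2 lying left of the leftmost one (i.e. a 2 all of
    whose left neighbours are 2's) by 1_i, for every i < r. *)
Fixpoint replace_leading_twos (r : nat) (x : word) : list word :=
  match x with
  | Two :: x' =>
      map (fun i => One i :: x') (seq 0 r)
      ++ map (cons Two) (replace_leading_twos r x')
  | _ => []
  end.

Definition down (r : nat) (x : word) : list word :=
  match del_leftmost_one x with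
  | Some y => y :: replace_leading_twos r x
  | None => replace_leading_twos r x
  end.

(** Number of downward paths of exactly n edges from y to x. *)
Fixpoint npaths (r : nat) (n : nat) (x y : word) : nat :=
  match n with
  | O => if word_eqb x y then 1%nat else 0%nat
  | S n' => fold_right (fun c s => (npaths r n' x c + s)%nat) 0%nat (down r y)
  end.

(** d_r(x,y): every edge lowers |.| by one, so paths from y to x with
    |y_i| = i have exactly |y| - |x| edges. *)
Definition dr (r : nat) (x y : word) : nat := npaths r (size y - size x) x y.

Fixpoint words_of_size (r : nat) (m : nat) : list word :=
  match m with
  | O => [[]]
  | S m' =>
      flat_map (fun i => map (cons (One i)) (words_of_size r m')) (seq 0 r)
      ++ match m' with
         | O => []
         | S m'' => map (cons Two) (words_of_size r m'')
         end
  end.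

(** Infinite words ...alpha_2 alpha_1 : [v j] is alpha_{j+1}. *)
Definition inf_word := nat -> letter.

Definition valid_inf_word (r : nat) (v : inf_word) : Prop :=
  forall j, valid_letter r (v j).

(** e(w,v): number of ones in the longest common suffix of w and v.
    [l] is a finite word read from the right. *)
Fixpoint e_aux (l : list letter) (v : inf_word) (j : nat) : nat :=
  match l with
  | [] => 0%nat
  | a :: l' =>
      if letter_eqb a (v j)
      then ((if is_one a then 1 else 0) + e_aux l' v (S j))%nat
      else 0%nat
  end.

Definition e (w : word) (v : inf_word) : nat := e_aux (rev w) v 0.

(** g-values: reading a word from the right ([l] is the reversed word), with
    [acc] the digit sum of the part already read, the j-th two from the right
    gets g = beta_0 + ... + beta_{j-1} + 2j - 1 = acc + 1. *)
Fixpoint gs (l : list letter) (acc : nat) : list nat :=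
  match l with
  | [] => []
  | One _ :: l' => gs l' (S acc)
  | Two :: l' => S acc :: gs l' (acc + 2)
  end.

Definition g (x : word) (j : nat) : nat := nth (j - 1) (gs (rev x) 0) 0%nat.

Definition pi_of_gs (l : list nat) : R :=
  fold_right (fun gv p =>
     (if Nat.ltb 1 gv then (INR gv - 1) / INR gv else 1) * p) 1 l.

Definition pi (x : word) : R := pi_of_gs (gs (rev x) 0).

Definition pi_inf (v : inf_word) : R :=
  real (Lim_seq (fun N => pi_of_gs (gs (map v (seq 0 N)) 0))).

Definition letterwise_cvg (vn : nat -> word) (v : inf_word) : Prop :=
  forall k, exists N, forall n, (N <= n)%nat ->
    (k <= length (vn n))%nat /\
    forall j, (j < k)%nat -> nth j (rev (vn n)) Two = v j.

(** mu_{r,v,beta}(w) computed along the sequence vn (the paper shows this limit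
    exists and is independent of the admissible sequence). *)
Definition mu_along (r : nat) (vn : nat -> word) (w : word) : R :=
  real (Lim_seq (fun n =>
    INR (dr r [] w) * INR (dr r w (vn n)) / INR (dr r [] (vn n)))).

Definition sumR (l : list R) : R := fold_right Rplus 0 l.

From Stdlib Require Import Reals List FinFun Arith Lia Lra Classical.
From Coquelicot Require Import Coquelicot.
Import ListNotations.
Open Scope R_scope.

(* For a finite word y write mu_y(u) = d(ε,u) d(u,y) / d(ε,y), so that mu_{r,v,beta}(u) is the
   limit of mu_{v_n}(u).  One step of the path recursion gives
     d(u, 1_i x) = d(u, x) + [u = 1_i x],   d(u, 2x) = r (|x| + 1 - |u|) d(u, x) + d(tail u, x),
   and by induction on y the total mass that mu_y gives to Qbar (all levels together) is at most
   G(y) (1 + b(y)), where G(y) is the product of 1 + 2/(|x| + 1) over the factorisations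
   y = p 2 x, and b(y) counts the suffixes of y lying in Qbar.  Moreover G(y) pi(y)^2 <= 3.
   Since pi(v) > 0, v has at least k ones, so b(v_n) stays bounded once v_n ends in enough of v;
   and pi(v_n) -> beta pi(v) > 0.  Hence the Qbar-mass of mu_{v_n} is bounded uniformly in n,
   the series sum_m mu(Qbar at level m) converges and its terms tend to 0.

   Passing to the limit needs lim_n mu_{v_n}(u) to exist.  For words y = p z ending in a fixed
   long suffix z of v, the same recursion shows that d(u, y) / d(ε, y) is a fixed linear
   combination of the products P_j(y) = prod (1 - j/(|x| + 1)) over the factorisations
   y = q 2 x with |x| >= |z|.  Each P_j(v_n) converges: it is within O(j^2 / |z|) of
   P_1(v_n)^j, and P_1(v_n) = pi(v_n) / pi(z) converges. *)

Definition sumN {A} (f : A -> nat) (l : list A) : nat :=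
  fold_right (fun c s => (f c + s)%nat) 0%nat l.

Lemma sumN_app {A} (f : A -> nat) l1 l2 :
  sumN f (l1 ++ l2) = (sumN f l1 + sumN f l2)%nat.
Proof. induction l1 as [|a l1 IH]; simpl; [|rewrite IH]; lia. Qed.

Lemma sumN_map {A B} (f : B -> nat) (h : A -> B) l :
  sumN f (map h l) = sumN (fun a => f (h a)) l.
Proof. induction l as [|a l IH]; simpl; [|rewrite IH]; lia. Qed.

Lemma sumN_ext_in {A} (f g : A -> nat) l :
  (forall a, In a l -> f a = g a) -> sumN f l = sumN g l.
Proof.
  induction l as [|a l IH]; simpl; intros H; [reflexivity|].
  rewrite H, IH; auto.
Qed.

Lemma sumN_add {A} (f g : A -> nat) l :
  sumN (fun a => f a + g a)%nat l = (sumN f l + sumN g l)%nat.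
Proof. induction l as [|a l IH]; simpl; [|rewrite IH]; lia. Qed.

Lemma sumN_mul_l {A} c (f : A -> nat) l :
  sumN (fun a => c * f a)%nat l = (c * sumN f l)%nat.
Proof. induction l as [|a l IH]; simpl; [|rewrite IH]; lia. Qed.

Lemma sumN_zero_in {A} (f : A -> nat) l :
  (forall a, In a l -> f a = 0%nat) -> sumN f l = 0%nat.
Proof.
  induction l as [|a l IH]; simpl; intros H; [reflexivity|].
  rewrite H, IH; auto.
Qed.

Lemma sumN_const {A} c (l : list A) : sumN (fun _ => c) l = (length l * c)%nat.
Proof. induction l as [|a l IH]; simpl; [|rewrite IH]; lia. Qed.

Lemma sumN_seq_eqb j s n :
  sumN (fun i => Nat.b2n (Nat.eqb j i)) (seq s n) = Nat.b2n ((s <=? j) && (j <? s + n)).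
Proof.
  revert s; induction n as [|n IH]; intros s; simpl.
  - destruct (Nat.leb_spec s j), (Nat.ltb_spec j (s + 0)); simpl; lia.
  - rewrite IH.
    destruct (Nat.eqb_spec j s), (Nat.leb_spec (S s) j), (Nat.ltb_spec j (S s + n)),
      (Nat.leb_spec s j), (Nat.ltb_spec j (s + S n)); simpl; lia.
Qed.

Lemma letter_eqb_eq a b : letter_eqb a b = true <-> a = b.
Proof.
  destruct a as [i|], b as [j|]; simpl; try (split; congruence).
  rewrite Nat.eqb_eq. split; congruence.
Qed.

Lemma word_eqb_eq x y : word_eqb x y = true <-> x = y.
Proof.
  revert y; induction x as [|a x IH]; intros [|b y]; simpl; try (split; congruence).
  rewrite Bool.andb_true_iff, letter_eqb_eq, IH. split; [intros [-> ->]|intros [= -> ->]]; auto.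
Qed.

Lemma word_eqb_size x y : size x <> size y -> word_eqb x y = false.
Proof.
  intros H. destruct (word_eqb x y) eqn:E; auto. apply word_eqb_eq in E; subst; tauto.
Qed.

Lemma size_cons a x : size (a :: x) = (digit a + size x)%nat.
Proof. reflexivity. Qed.

Lemma size_app x y : size (x ++ y) = (size x + size y)%nat.
Proof. induction x as [|a x IH]; simpl; [|rewrite IH]; lia. Qed.

Lemma size_rev x : size (rev x) = size x.
Proof. induction x as [|a x IH]; simpl; [|rewrite size_app, IH]; simpl; lia. Qed.

Lemma size_repeat_two n : size (repeat Two n) = (2 * n)%nat.
Proof. induction n as [|n IH]; simpl; [|rewrite IH]; lia. Qed.

Lemma words_of_size_size r m w : In w (words_of_size r m) -> size w = m.
Proof.
  revert w; induction m as [m IH] using lt_wf_ind; intros w Hw.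
  destruct m as [|m]; cbn [words_of_size] in Hw.
  - now destruct Hw as [<-|[]].
  - apply in_app_or in Hw as [Hw|Hw].
    + apply in_flat_map in Hw as [i [_ Hi]]. apply in_map_iff in Hi as [w' [<- Hw']].
      simpl. rewrite (IH m) by auto. lia.
    + destruct m as [|m]; [destruct Hw|].
      apply in_map_iff in Hw as [w' [<- Hw']]. simpl. rewrite (IH m) by auto. lia.
Qed.

Lemma words_of_size_valid r m w : In w (words_of_size r m) -> valid_word r w.
Proof.
  revert w; induction m as [m IH] using lt_wf_ind; intros w Hw.
  destruct m as [|m]; cbn [words_of_size] in Hw.
  - destruct Hw as [<-|[]]. intros a [].
  - apply in_app_or in Hw as [Hw|Hw].
    + apply in_flat_map in Hw as [i [Hi Hw]]. apply in_map_iff in Hw as [w' [<- Hw']].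
      intros a [<-|Ha]; [apply in_seq in Hi; simpl; lia|]. exact (IH m ltac:(lia) w' Hw' a Ha).
    + destruct m as [|m]; [destruct Hw|].
      apply in_map_iff in Hw as [w' [<- Hw']].
      intros a [<-|Ha]; [exact I|]. exact (IH m ltac:(lia) w' Hw' a Ha).
Qed.

Lemma NoDup_map_cons (c : letter) (l : list word) : NoDup l -> NoDup (map (cons c) l).
Proof. apply Injective_map_NoDup. now intros x y [=]. Qed.

Lemma NoDup_flat_map_ones (l : list word) s n :
  NoDup l -> NoDup (flat_map (fun i => map (cons (One i)) l) (seq s n)).
Proof.
  intros Hl. revert s; induction n as [|n IH]; intros s; simpl; [constructor|].
  apply NoDup_app; [now apply NoDup_map_cons|apply IH|].
  intros w Hw Hw'. apply in_map_iff in Hw as [? [<- _]].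
  apply in_flat_map in Hw' as [i [Hi Hw']]. apply in_map_iff in Hw' as [? [[= ->] _]].
  apply in_seq in Hi. lia.
Qed.

Lemma words_of_size_NoDup r m : NoDup (words_of_size r m).
Proof.
  induction m as [m IH] using lt_wf_ind.
  destruct m as [|m]; cbn [words_of_size].
  - repeat constructor. intros [].
  - pose proof (NoDup_flat_map_ones (words_of_size r m) 0 r ltac:(apply IH; lia)).
    destruct m as [|m]; [now rewrite app_nil_r|].
    apply NoDup_app; [assumption|apply NoDup_map_cons, IH; lia|].
    intros w Hw Hw'. apply in_flat_map in Hw as [i [_ Hw]].
    apply in_map_iff in Hw as [? [<- _]]. apply in_map_iff in Hw' as [? [[=] _]].
Qed.

Definition dr_tail (r : nat) (u x : word) : nat :=
  match u with [] => 0%nat | _ :: u1 => dr r u1 x end.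

Definition head_matches (u x : word) : nat :=
  match u with [] => 0%nat | _ :: u1 => Nat.b2n (word_eqb u1 x) end.

Lemma size_del_leftmost_one x z : del_leftmost_one x = Some z -> (size z + 1 = size x)%nat.
Proof.
  revert z; induction x as [|[i|] x IH]; simpl; intros z H; try discriminate.
  - injection H as <-; lia.
  - destruct (del_leftmost_one x) as [w|] eqn:E; simpl in H; [|discriminate].
    injection H as <-. specialize (IH w eq_refl). simpl; lia.
Qed.

Lemma size_replace_leading_twos r x z :
  In z (replace_leading_twos r x) -> (size z + 1 = size x)%nat.
Proof.
  revert z; induction x as [|[i|] x IH]; simpl; intros z H; try tauto.
  apply in_app_or in H as [H|H]; apply in_map_iff in H as [w [<- Hw]]; simpl; [lia|].
  specialize (IH w Hw); lia.
Qed.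

Lemma size_down r x z : In z (down r x) -> (size z + 1 = size x)%nat.
Proof.
  unfold down. destruct (del_leftmost_one x) eqn:E; [intros [<-|H]|intros H].
  - now apply size_del_leftmost_one.
  - now apply (size_replace_leading_twos r).
  - now apply (size_replace_leading_twos r).
Qed.

Lemma dr_below r u y : (size y < size u)%nat -> dr r u y = 0%nat.
Proof.
  intros H. unfold dr. replace (size y - size u)%nat with 0%nat by lia. simpl.
  now rewrite word_eqb_size by lia.
Qed.

Lemma dr_unfold r u y :
  dr r u y = (sumN (dr r u) (down r y) + Nat.b2n (word_eqb u y))%nat.
Proof.
  destruct (Nat.lt_ge_cases (size u) (size y)) as [H|H].
  - rewrite word_eqb_size by lia. unfold dr at 1.
    destruct (size y - size u)%nat as [|n] eqn:En; [lia|]. simpl. rewrite Nat.add_0_r.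
    apply sumN_ext_in. intros z Hz. apply size_down in Hz. unfold dr. f_equal. lia.
  - rewrite sumN_zero_in by (intros z Hz; apply size_down in Hz; apply dr_below; lia).
    unfold dr. replace (size y - size u)%nat with 0%nat by lia. reflexivity.
Qed.

Lemma dr_tail_unfold r u y :
  dr_tail r u y = (sumN (dr_tail r u) (down r y) + head_matches u y)%nat.
Proof.
  destruct u as [|a u]; simpl; [now rewrite sumN_zero_in|]. apply dr_unfold.
Qed.

Lemma dr_cons_one r u i x :
  dr r u (One i :: x) = (dr r u x + Nat.b2n (word_eqb u (One i :: x)))%nat.
Proof. rewrite dr_unfold. simpl. lia. Qed.

Lemma sumN_down_two r (f : word -> nat) x :
  sumN f (down r (Two :: x)) =
  (sumN (fun z => f (Two :: z)) (down r x) + sumN (fun i => f (One i :: x)) (seq 0 r))%nat.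
Proof.
  unfold down; simpl. destruct (del_leftmost_one x); simpl;
    rewrite !sumN_app, !sumN_map; lia.
Qed.

Lemma head_matches_cons_two r u x : valid_word r u ->
  (sumN (fun i => Nat.b2n (word_eqb u (One i :: x))) (seq 0 r)
   + Nat.b2n (word_eqb u (Two :: x)))%nat = head_matches u x.
Proof.
  intros Hu. destruct u as [|[j|] u]; simpl.
  - now rewrite sumN_zero_in.
  - assert (Hj : (j < r)%nat) by exact (Hu (One j) (or_introl eq_refl)).
    destruct (word_eqb u x); simpl.
    + rewrite (sumN_ext_in _ (fun i => Nat.b2n (Nat.eqb j i)))
        by (intros i _; now rewrite Bool.andb_true_r).
      rewrite sumN_seq_eqb. destruct (Nat.leb_spec 0 j), (Nat.ltb_spec j (0 + r)); simpl; lia.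
    + rewrite sumN_zero_in; [reflexivity|]. intros i _. now rewrite Bool.andb_false_r.
  - rewrite sumN_zero_in; [reflexivity|]. now intros i _.
Qed.

Lemma dr_cons_two r u x : valid_word r u ->
  dr r u (Two :: x) = (r * (size x + 1 - size u) * dr r u x + dr_tail r u x)%nat.
Proof.
  intros Hu. remember (size x) as n eqn:Hn. revert x Hn.
  induction n as [n IH] using lt_wf_ind; intros x ->.
  rewrite dr_unfold, sumN_down_two.
  rewrite (sumN_ext_in (fun z : word => dr r u (Two :: z))
             (fun z => r * (size x - size u) * dr r u z + dr_tail r u z)%nat).
  2:{ intros z Hz. pose proof (size_down r x z Hz). rewrite (IH (size z)) by lia.
      do 3 f_equal. lia. }
  rewrite (sumN_ext_in (fun i => dr r u (One i :: x))
             (fun i => dr r u x + Nat.b2n (word_eqb u (One i :: x)))%nat)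
    by (intros; apply dr_cons_one).
  rewrite !sumN_add, sumN_mul_l, sumN_const, length_seq.
  pose proof (dr_unfold r u x) as HD. pose proof (dr_tail_unfold r u x) as HT.
  pose proof (head_matches_cons_two r u x Hu) as HM.
  destruct (word_eqb u x) eqn:E; simpl Nat.b2n in *.
  - apply word_eqb_eq in E as ->. rewrite Nat.sub_diag.
    replace (size x + 1 - size x)%nat with 1%nat by lia. lia.
  - destruct (Nat.le_gt_cases (size u) (size x)).
    + replace (size x + 1 - size u)%nat with (size x - size u + 1)%nat by lia.
      rewrite HT, HD. generalize (size x - size u)%nat. intros s. nia.
    + rewrite (dr_below r u x) in * by lia. rewrite HT. nia.
Qed.

Lemma dr_nil_cons_one r i x : dr r [] (One i :: x) = dr r [] x.
Proof. rewrite dr_cons_one. simpl. lia. Qed.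

Lemma dr_nil_cons_two r x : dr r [] (Two :: x) = (r * (size x + 1) * dr r [] x)%nat.
Proof. rewrite dr_cons_two by (intros a []). simpl. lia. Qed.

Lemma dr_nil_pos r x : (0 < r)%nat -> (0 < dr r [] x)%nat.
Proof.
  intros Hr. induction x as [|[i|] x IH]; [cbv; lia|rewrite dr_nil_cons_one; auto|].
  rewrite dr_nil_cons_two. nia.
Qed.

Lemma sumR_app l1 l2 : sumR (l1 ++ l2) = sumR l1 + sumR l2.
Proof. induction l1 as [|a l1 IH]; simpl; [|rewrite IH]; lra. Qed.

Lemma sumR_map_ext_in {A} (f g : A -> R) l :
  (forall a, In a l -> f a = g a) -> sumR (map f l) = sumR (map g l).
Proof. intros H. f_equal. now apply map_ext_in. Qed.

Lemma sumR_map_le {A} (f g : A -> R) l :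
  (forall a, In a l -> f a <= g a) -> sumR (map f l) <= sumR (map g l).
Proof.
  induction l as [|a l IH]; simpl; intros H; [lra|].
  apply Rplus_le_compat; auto.
Qed.

Lemma sumR_map_nonneg {A} (f : A -> R) l :
  (forall a, In a l -> 0 <= f a) -> 0 <= sumR (map f l).
Proof.
  intros H. apply Rle_trans with (sumR (map (fun _ => 0) l)); [|now apply sumR_map_le].
  clear H; induction l as [|a l IH]; simpl; lra.
Qed.

Lemma sumR_map_zero {A} (f : A -> R) l :
  (forall a, In a l -> f a = 0) -> sumR (map f l) = 0.
Proof.
  intros H. rewrite (sumR_map_ext_in f (fun _ => 0)) by auto.
  clear H; induction l as [|a l IH]; simpl; lra.
Qed.

Lemma sumR_map_plus {A} (f g : A -> R) l :
  sumR (map (fun a => f a + g a) l) = sumR (map f l) + sumR (map g l).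
Proof. induction l as [|a l IH]; simpl; [|rewrite IH]; lra. Qed.

Lemma sumR_map_scal {A} c (f : A -> R) l :
  sumR (map (fun a => c * f a) l) = c * sumR (map f l).
Proof. induction l as [|a l IH]; simpl; [|rewrite IH]; lra. Qed.

Lemma sumR_map_const_seq c s n : sumR (map (fun _ : nat => c) (seq s n)) = INR n * c.
Proof.
  revert s; induction n as [|n IH]; intros s; [simpl; lra|].
  cbn [seq map]. unfold sumR in *. cbn [fold_right]. rewrite IH, S_INR. lra.
Qed.

Lemma sumR_filter_flat_map {A B} (f : B -> R) (p : B -> bool) (h : A -> list B) l :
  sumR (map f (filter p (flat_map h l))) = sumR (map (fun a => sumR (map f (filter p (h a)))) l).
Proof.
  induction l as [|a l IH]; simpl; [lra|]. now rewrite filter_app, map_app, sumR_app, IH.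
Qed.

Lemma sumR_filter_map_cons_le (f : word -> R) (p : word -> bool) c l :
  (forall w, p (c :: w) = true -> p w = true) -> (forall w, 0 <= f (c :: w)) ->
  sumR (map f (filter p (map (cons c) l))) <= sumR (map (fun w => f (c :: w)) (filter p l)).
Proof.
  intros Hp Hf. induction l as [|a l IH]; simpl; [lra|].
  destruct (p (c :: a)) eqn:E.
  - rewrite (Hp a E). simpl. lra.
  - destruct (p a); simpl; [specialize (Hf a)|]; lra.
Qed.

Lemma sumR_indicator_NoDup (l : list word) w c : NoDup l -> 0 <= c ->
  sumR (map (fun u => if word_eqb u w then c else 0) l) <= c.
Proof.
  intros Hl Hc. induction Hl as [|u l Hu Hl IH]; simpl; [lra|].
  destruct (word_eqb u w) eqn:E; [|lra].
  apply word_eqb_eq in E as ->. rewrite sumR_map_zero; [lra|].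
  intros u Hu'. destruct (word_eqb u w) eqn:E; auto.
  apply word_eqb_eq in E as ->. contradiction.
Qed.

Fixpoint sum_below (f : nat -> R) (n : nat) : R :=
  match n with O => 0 | S n' => sum_below f n' + f n' end.

Definition shifted (f : nat -> R) (m : nat) : R :=
  match m with O => 0 | S m' => f m' end.

Lemma sum_below_ext f g n :
  (forall m, (m < n)%nat -> f m = g m) -> sum_below f n = sum_below g n.
Proof. induction n as [|n IH]; simpl; intros H; [lra|]. rewrite IH, H by auto. lra. Qed.

Lemma sum_below_le f g n :
  (forall m, (m < n)%nat -> f m <= g m) -> sum_below f n <= sum_below g n.
Proof.
  induction n as [|n IH]; simpl; intros H; [lra|].
  apply Rplus_le_compat; auto.
Qed.

Lemma sum_below_plus f g n :
  sum_below (fun m => f m + g m) n = sum_below f n + sum_below g n.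
Proof. induction n as [|n IH]; simpl; [|rewrite IH]; lra. Qed.

Lemma sum_below_scal c f n : sum_below (fun m => c * f m) n = c * sum_below f n.
Proof. induction n as [|n IH]; simpl; [|rewrite IH]; lra. Qed.

Lemma sum_below_shifted f n : sum_below (shifted f) (S n) = sum_below f n.
Proof.
  induction n as [|n IH]; [simpl; lra|].
  change (sum_below (shifted f) (S n) + f n = sum_below f n + f n). now rewrite IH.
Qed.

Lemma sum_below_zero_tail f n d :
  (forall m, (n <= m)%nat -> f m = 0) -> sum_below f (d + n) = sum_below f n.
Proof.
  intros H. induction d as [|d IH]; [reflexivity|]. simpl. rewrite IH, H by lia. lra.
Qed.

Lemma sum_below_mono f n d :
  (forall m, 0 <= f m) -> sum_below f n <= sum_below f (d + n).
Proof. intros H. induction d as [|d IH]; simpl; [lra|]. specialize (H (d + n)%nat). lra. Qed.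

Lemma sum_below_delta a c :
  sum_below (fun m => if Nat.eqb m a then c else 0) (S a) = c.
Proof.
  simpl. rewrite Nat.eqb_refl, (sum_below_ext _ (fun _ => 0)).
  - clear. induction a as [|a IH]; simpl; lra.
  - intros m Hm. destruct (Nat.eqb_spec m a); [lia|reflexivity].
Qed.

Lemma is_lim_seq_close (u : nat -> R) (l : R) : is_lim_seq u l ->
  forall eps, 0 < eps -> exists N, forall n, (N <= n)%nat -> Rabs (u n - l) < eps.
Proof.
  intros H eps Heps. apply is_lim_seq_spec in H.
  destruct (H (mkposreal eps Heps)) as [N HN]. eauto.
Qed.

Lemma is_lim_seq_pow (u : nat -> R) (l : R) j :
  is_lim_seq u l -> is_lim_seq (fun n => u n ^ j) (l ^ j).
Proof.
  intros H. induction j as [|j IH]; [apply is_lim_seq_const|].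
  now apply is_lim_seq_mult'.
Qed.

Lemma ex_finite_lim_seq_approx (a : nat -> R) :
  (forall eps, 0 < eps -> exists b, ex_finite_lim_seq b /\
     exists N, forall n, (N <= n)%nat -> Rabs (a n - b n) <= eps) ->
  ex_finite_lim_seq a.
Proof.
  intros H. apply ex_lim_seq_cauchy_corr. intros [eps Heps]. simpl.
  destruct (H (eps / 4)) as [b [[l Hb] [N1 HN1]]]; [lra|].
  destruct (is_lim_seq_close b l Hb (eps / 4)) as [N2 HN2]; [lra|].
  exists (N1 + N2)%nat. intros n m Hn Hm.
  specialize (HN1 n ltac:(lia)) as Han. specialize (HN1 m ltac:(lia)) as Ham.
  specialize (HN2 n ltac:(lia)) as Hbn. specialize (HN2 m ltac:(lia)) as Hbm.
  replace (a n - a m) with ((a n - b n) + (b n - l) + (l - b m) + (b m - a m)) by ring.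
  eapply Rle_lt_trans; [apply Rabs_4|].
  rewrite (Rabs_minus_sym l), (Rabs_minus_sym (b m) (a m)). lra.
Qed.

Lemma sumR_lim {A} (L : list A) (f : A -> nat -> R) (g : A -> R) :
  (forall a, In a L -> is_lim_seq (f a) (g a)) ->
  is_lim_seq (fun n => sumR (map (fun a => f a n) L)) (sumR (map g L)).
Proof.
  induction L as [|a L IH]; intros H; simpl; [apply is_lim_seq_const|].
  apply is_lim_seq_plus'; [apply H; now left|apply IH; intros; apply H; now right].
Qed.

Lemma sum_below_lim (f : nat -> nat -> R) (g : nat -> R) M :
  (forall m, is_lim_seq (fun n => f n m) (g m)) ->
  is_lim_seq (fun n => sum_below (f n) M) (sum_below g M).
Proof.
  intros H. induction M as [|M IH]; simpl; [apply is_lim_seq_const|].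
  now apply is_lim_seq_plus'.
Qed.

Lemma is_lim_seq_terms_bounded_sums (h : nat -> R) C :
  (forall m, 0 <= h m) -> (forall M, sum_below h M <= C) -> is_lim_seq h 0.
Proof.
  intros Hpos HC.
  destruct (ex_finite_lim_seq_incr (sum_below h) C) as [l Hl];
    [intros n; simpl; specialize (Hpos n); lra|exact HC|].
  apply is_lim_seq_ext with (fun M => sum_below h (S M) - sum_below h M); [intros M; simpl; ring|].
  replace 0 with (l - l) by ring.
  apply is_lim_seq_minus'; [apply (is_lim_seq_incr_1 (sum_below h))|]; exact Hl.
Qed.

Lemma e_le_cons a w v : (e w v <= e (a :: w) v)%nat.
Proof.
  unfold e. simpl. generalize (rev w) 0%nat. intros l.
  induction l as [|b l IH]; intros j; simpl; [lia|].
  destruct (letter_eqb b (v j)); [specialize (IH (S j))|]; lia.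
Qed.

Definition mu_at (r : nat) (y u : word) : R :=
  INR (dr r [] u) * INR (dr r u y) / INR (dr r [] y).

Definition in_Qbar (v : inf_word) (k : nat) (w : word) : bool := Nat.ltb (e w v) k.

Definition Qbar_mass (r : nat) (v : inf_word) (k : nat) (y : word) (m : nat) : R :=
  sumR (map (mu_at r y) (filter (in_Qbar v k) (words_of_size r m))).

Definition mu_tail (r : nat) (x u : word) : R :=
  INR (dr r [] u) * INR (dr_tail r u x) / (INR r * INR (size x + 1) * INR (dr r [] x)).

Definition Qbar_tail_mass (r : nat) (v : inf_word) (k : nat) (x : word) (m : nat) : R :=
  sumR (map (mu_tail r x) (filter (in_Qbar v k) (words_of_size r m))).

Definition Qbar_mass_total (r : nat) (v : inf_word) (k : nat) (y : word) : R :=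
  sum_below (Qbar_mass r v k y) (size y + 1).

Fixpoint growth (y : word) : R :=
  match y with
  | [] => 1
  | One _ :: x => growth x
  | Two :: x => (1 + 2 / INR (size x + 1)) * growth x
  end.

Fixpoint Qbar_suffix_count (v : inf_word) (k : nat) (y : word) : nat :=
  match y with
  | [] => 0%nat
  | a :: x => (Qbar_suffix_count v k x + Nat.b2n (in_Qbar v k (a :: x)))%nat
  end.

Lemma growth_ge1 y : 1 <= growth y.
Proof.
  induction y as [|[i|] x IH]; simpl; [lra|auto|].
  assert (0 <= 2 / INR (size x + 1)) by (apply Rdiv_le_0_compat; [lra|apply lt_0_INR; lia]).
  nra.
Qed.

Section FiniteMeasures.

Variable r : nat.
Hypothesis r_pos : (0 < r)%nat.

Lemma INR_dr_nil_pos x : 0 < INR (dr r [] x).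
Proof. apply lt_0_INR, dr_nil_pos, r_pos. Qed.

Lemma mu_at_nonneg y u : 0 <= mu_at r y u.
Proof.
  unfold mu_at. pose proof (INR_dr_nil_pos y). pose proof (pos_INR (dr r [] u)).
  pose proof (pos_INR (dr r u y)). apply Rdiv_le_0_compat; [nra|lra].
Qed.

Lemma mu_at_cons_one i x u :
  mu_at r (One i :: x) u = mu_at r x u + (if word_eqb u (One i :: x) then 1 else 0).
Proof.
  unfold mu_at. rewrite dr_cons_one, dr_nil_cons_one, plus_INR.
  pose proof (INR_dr_nil_pos x).
  destruct (word_eqb u (One i :: x)) eqn:E; simpl INR.
  - apply word_eqb_eq in E as ->. rewrite dr_nil_cons_one. field. lra.
  - field. lra.
Qed.

Lemma mu_at_cons_two x u : valid_word r u ->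
  mu_at r (Two :: x) u =
  INR (size x + 1 - size u) / INR (size x + 1) * mu_at r x u + mu_tail r x u.
Proof.
  intros Hu. unfold mu_at, mu_tail. rewrite dr_cons_two, dr_nil_cons_two by auto.
  rewrite !plus_INR, !mult_INR, !plus_INR.
  pose proof (INR_dr_nil_pos x). pose proof (lt_0_INR r r_pos).
  pose proof (pos_INR (size x)). simpl INR. field. lra.
Qed.

Lemma mu_at_below y u : (size y < size u)%nat -> mu_at r y u = 0.
Proof. intros H. unfold mu_at. rewrite (dr_below r u y H). simpl INR. lra. Qed.

Variables (v : inf_word) (k : nat).

Lemma in_Qbar_cons a w : in_Qbar v k (a :: w) = true -> in_Qbar v k w = true.
Proof. unfold in_Qbar. rewrite !Nat.ltb_lt. pose proof (e_le_cons a w v). lia. Qed.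

Lemma Qbar_mass_nonneg y m : 0 <= Qbar_mass r v k y m.
Proof. apply sumR_map_nonneg. intros; apply mu_at_nonneg. Qed.

Lemma Qbar_mass_above y m : (size y < m)%nat -> Qbar_mass r v k y m = 0.
Proof.
  intros H. apply sumR_map_zero. intros u Hu.
  apply filter_In in Hu as [Hu _]. apply words_of_size_size in Hu.
  apply mu_at_below. lia.
Qed.

Lemma Qbar_mass_cons_one i x m :
  Qbar_mass r v k (One i :: x) m <= Qbar_mass r v k x m +
    (if (Nat.eqb m (size x + 1) && in_Qbar v k (One i :: x))%bool then 1 else 0).
Proof.
  unfold Qbar_mass at 1.
  rewrite (sumR_map_ext_in _ (fun u => mu_at r x u + if word_eqb u (One i :: x) then 1 else 0))
    by (intros; apply mu_at_cons_one).
  rewrite sumR_map_plus. apply Rplus_le_compat_l.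
  destruct (Nat.eqb m (size x + 1) && in_Qbar v k (One i :: x))%bool eqn:E.
  - apply sumR_indicator_NoDup; [apply NoDup_filter, words_of_size_NoDup|lra].
  - rewrite sumR_map_zero; [lra|]. intros u Hu.
    destruct (word_eqb u (One i :: x)) eqn:Eu; auto.
    apply word_eqb_eq in Eu as ->. apply filter_In in Hu as [Hu Hbad].
    apply words_of_size_size in Hu. rewrite Hbad, Bool.andb_true_r, Nat.eqb_neq in E.
    simpl in Hu. lia.
Qed.

Lemma mu_tail_nonneg x u : 0 <= mu_tail r x u.
Proof.
  unfold mu_tail. pose proof (INR_dr_nil_pos x). pose proof (lt_0_INR r r_pos).
  pose proof (pos_INR (dr r [] u)). pose proof (pos_INR (dr_tail r u x)).
  pose proof (lt_0_INR (size x + 1) ltac:(lia)).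
  apply Rdiv_le_0_compat; [nra|]. apply Rmult_lt_0_compat; nra.
Qed.

Lemma mu_tail_cons_one x i w :
  mu_tail r x (One i :: w) = / (INR r * INR (size x + 1)) * mu_at r x w.
Proof.
  unfold mu_tail, mu_at. simpl dr_tail. rewrite dr_nil_cons_one.
  pose proof (INR_dr_nil_pos x). pose proof (lt_0_INR r r_pos).
  pose proof (lt_0_INR (size x + 1) ltac:(lia)). field. lra.
Qed.

Lemma mu_tail_cons_two x w :
  mu_tail r x (Two :: w) = INR (size w + 1) / INR (size x + 1) * mu_at r x w.
Proof.
  unfold mu_tail, mu_at. simpl dr_tail. rewrite dr_nil_cons_two, !mult_INR.
  pose proof (INR_dr_nil_pos x). pose proof (lt_0_INR r r_pos).
  pose proof (lt_0_INR (size x + 1) ltac:(lia)). field. lra.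
Qed.

Lemma Qbar_mass_cons_two x m :
  Qbar_mass r v k (Two :: x) m =
  INR (size x + 1 - m) / INR (size x + 1) * Qbar_mass r v k x m + Qbar_tail_mass r v k x m.
Proof.
  unfold Qbar_mass, Qbar_tail_mass. rewrite <- sumR_map_scal, <- sumR_map_plus.
  apply sumR_map_ext_in. intros u Hu. apply filter_In in Hu as [Hu _].
  rewrite mu_at_cons_two by (eapply words_of_size_valid; eauto).
  now rewrite (words_of_size_size _ _ _ Hu).
Qed.

Lemma Qbar_tail_mass_le x m :
  Qbar_tail_mass r v k x m <=
  (shifted (Qbar_mass r v k x) m + shifted (shifted (fun j => INR (S j) * Qbar_mass r v k x j)) m)
  / INR (size x + 1).
Proof.
  assert (Hg : 0 < INR (size x + 1)) by (apply lt_0_INR; lia).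
  unfold Qbar_tail_mass. destruct m as [|m]; cbn [words_of_size shifted].
  { simpl. destruct (in_Qbar v k []); simpl; [|lra].
    unfold mu_tail. simpl dr_tail. rewrite Rmult_0_r, Rdiv_0_l. lra. }
  rewrite filter_app, map_app, sumR_app, Rdiv_plus_distr. apply Rplus_le_compat.
  - rewrite sumR_filter_flat_map.
    eapply Rle_trans.
    { apply sumR_map_le. intros i _. apply sumR_filter_map_cons_le;
        [apply in_Qbar_cons|intros; apply mu_tail_nonneg]. }
    rewrite (sumR_map_ext_in _ (fun _ => / (INR r * INR (size x + 1)) * Qbar_mass r v k x m)).
    2:{ intros i _. unfold Qbar_mass. rewrite <- sumR_map_scal.
        apply sumR_map_ext_in. intros w _. apply mu_tail_cons_one. }
    rewrite sumR_map_const_seq. right. field. split; [lra|apply not_0_INR; lia].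
  - destruct m as [|m]; [simpl; lra|].
    eapply Rle_trans.
    { apply sumR_filter_map_cons_le; [apply in_Qbar_cons|intros; apply mu_tail_nonneg]. }
    right. rewrite (sumR_map_ext_in _ (fun w => INR (S m) / INR (size x + 1) * mu_at r x w)).
    + rewrite sumR_map_scal. fold (Qbar_mass r v k x m). cbn [shifted]. field. lra.
    + intros w Hw. apply filter_In in Hw as [Hw _]. rewrite mu_tail_cons_two.
      now rewrite (words_of_size_size _ _ _ Hw), Nat.add_1_r.
Qed.

Lemma Qbar_mass_total_cons_one i x :
  Qbar_mass_total r v k (One i :: x) <=
  Qbar_mass_total r v k x + (if in_Qbar v k (One i :: x) then 1 else 0).
Proof.
  unfold Qbar_mass_total.
  replace (size (One i :: x) + 1)%nat with (S (size x + 1)) by (simpl; lia).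
  eapply Rle_trans; [apply sum_below_le; intros m _; apply Qbar_mass_cons_one|].
  rewrite sum_below_plus, (sum_below_zero_tail _ _ 1) by (intros; apply Qbar_mass_above; lia).
  apply Rplus_le_compat_l. rewrite <- sum_below_delta with (a := (size x + 1)%nat).
  apply Req_le, sum_below_ext. intros m _. now destruct (Nat.eqb m (size x + 1)).
Qed.

Lemma Qbar_mass_total_cons_two x :
  Qbar_mass_total r v k (Two :: x) <= (1 + 2 / INR (size x + 1)) * Qbar_mass_total r v k x.
Proof.
  set (H := Qbar_mass r v k x). set (g := INR (size x + 1)).
  assert (Hg : 0 < g) by (apply lt_0_INR; lia).
  assert (Hzero : forall m, (size x + 1 <= m)%nat -> H m = 0)
    by (intros; apply Qbar_mass_above; lia).
  unfold Qbar_mass_total.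
  replace (size (Two :: x) + 1)%nat with (S (S (size x + 1))) by (simpl; lia).
  apply Rle_trans with (sum_below (fun m => INR (size x + 1 - m) * H m / g
      + shifted (fun j => H j / g) m + shifted (shifted (fun j => INR (S j) * H j / g)) m)
      (S (S (size x + 1)))).
  { apply sum_below_le. intros m _. rewrite Qbar_mass_cons_two.
    eapply Rle_trans; [apply Rplus_le_compat_l, Qbar_tail_mass_le|].
    right. fold H g. destruct m as [|[|m]]; cbn [shifted]; field; lra. }
  rewrite !sum_below_plus, !sum_below_shifted.
  change (S (S (size x + 1))) with (2 + (size x + 1))%nat.
  change (S (size x + 1)) with (1 + (size x + 1))%nat.
  rewrite (sum_below_zero_tail (fun m => INR (size x + 1 - m) * H m / g) _ 2),
    (sum_below_zero_tail (fun j => H j / g) _ 1)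
    by (intros m Hm; rewrite Hzero by lia; unfold Rdiv; ring).
  (* Level m receives the weights (|x| + 1 - m) + 1 + (m + 1) = |x| + 3. *)
  rewrite <- !sum_below_plus, <- sum_below_scal. apply Req_le, sum_below_ext. intros m Hm.
  rewrite minus_INR by lia. unfold g. rewrite S_INR, plus_INR. simpl INR. fold H.
  pose proof (pos_INR (size x)). field. lra.
Qed.

Lemma Qbar_mass_total_le_growth y :
  Qbar_mass_total r v k y <= growth y * (1 + INR (Qbar_suffix_count v k y)).
Proof.
  induction y as [|[i|] x IH].
  - unfold Qbar_mass_total, Qbar_mass. simpl. destruct (in_Qbar v k []); simpl; [|lra].
    unfold mu_at. simpl. lra.
  - eapply Rle_trans; [apply Qbar_mass_total_cons_one|]. simpl growth. simpl Qbar_suffix_count.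
    rewrite plus_INR. pose proof (growth_ge1 x).
    destruct (in_Qbar v k (One i :: x)); simpl INR; nra.
  - eapply Rle_trans; [apply Qbar_mass_total_cons_two|]. simpl growth. simpl Qbar_suffix_count.
    assert (0 <= 2 / INR (size x + 1)) by (apply Rdiv_le_0_compat; [lra|apply lt_0_INR; lia]).
    rewrite Rmult_assoc. apply Rmult_le_compat_l; [lra|].
    eapply Rle_trans; [exact IH|]. apply Rmult_le_compat_l; [pose proof (growth_ge1 x); lra|].
    rewrite plus_INR. pose proof (pos_INR (Nat.b2n (in_Qbar v k (Two :: x)))). lra.
Qed.

Lemma sum_below_Qbar_mass_le y M : sum_below (Qbar_mass r v k y) M <= Qbar_mass_total r v k y.
Proof.
  unfold Qbar_mass_total. destruct (Nat.le_gt_cases M (size y + 1)) as [HM|HM].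
  - replace (size y + 1)%nat with (size y + 1 - M + M)%nat by lia.
    apply sum_below_mono. intros; apply Qbar_mass_nonneg.
  - replace M with (M - (size y + 1) + (size y + 1))%nat by lia.
    rewrite sum_below_zero_tail; [lra|]. intros; apply Qbar_mass_above; lia.
Qed.

End FiniteMeasures.

Definition pi_factor (g : nat) : R := if Nat.ltb 1 g then (INR g - 1) / INR g else 1.

Lemma gs_app l1 l2 acc : gs (l1 ++ l2) acc = gs l1 acc ++ gs l2 (acc + size l1).
Proof.
  revert acc; induction l1 as [|[i|] l1 IH]; intros acc; simpl.
  - now rewrite Nat.add_0_r.
  - rewrite IH. do 2 f_equal. lia.
  - rewrite IH. do 3 f_equal. lia.
Qed.

Lemma pi_of_gs_app l1 l2 : pi_of_gs (l1 ++ l2) = pi_of_gs l1 * pi_of_gs l2.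
Proof. induction l1 as [|g l1 IH]; simpl; [|rewrite IH]; lra. Qed.

Lemma pi_cons_one i x : pi (One i :: x) = pi x.
Proof. unfold pi. simpl. now rewrite gs_app, app_nil_r. Qed.

Lemma pi_cons_two x : pi (Two :: x) = pi_factor (size x + 1) * pi x.
Proof.
  unfold pi. cbn [rev]. rewrite gs_app, pi_of_gs_app, size_rev. cbn [gs pi_of_gs fold_right].
  replace (S (0 + size x)) with (size x + 1)%nat by lia. unfold pi_factor. ring.
Qed.

Lemma pi_factor_range g : 0 < pi_factor g <= 1.
Proof.
  unfold pi_factor. destruct (Nat.ltb_spec 1 g) as [Hg|]; [|lra].
  apply lt_INR in Hg. simpl in Hg. split.
  - apply Rdiv_lt_0_compat; lra.
  - apply (proj1 (Rdiv_le_1 (INR g - 1) (INR g) ltac:(lra))); lra.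
Qed.

Lemma pi_range y : 0 < pi y <= 1.
Proof.
  induction y as [|[i|] x IH]; [unfold pi; simpl; lra|now rewrite pi_cons_one|].
  rewrite pi_cons_two. pose proof (pi_factor_range (size x + 1)).
  split; [apply Rmult_lt_0_compat|]; nra.
Qed.

Lemma growth_factor_pi_factor_le g : (2 <= g)%nat -> (1 + 2 / INR g) * pi_factor g ^ 2 <= 1.
Proof.
  intros Hg. unfold pi_factor. replace (Nat.ltb 1 g) with true by (symmetry; apply Nat.ltb_lt; lia).
  assert (1 <= INR g) by (apply (le_INR 1); lia).
  replace ((1 + 2 / INR g) * ((INR g - 1) / INR g) ^ 2) with (1 - (3 * INR g - 2) / INR g ^ 3)
    by (field; lra).
  enough (0 <= (3 * INR g - 2) / INR g ^ 3) by lra.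
  apply Rdiv_le_0_compat; [lra|apply pow_lt; lra].
Qed.

Lemma growth_pi_sq_le y : growth y * pi y ^ 2 <= 3.
Proof.
  induction y as [|[i|] x IH]; simpl growth; [unfold pi; simpl; lra|now rewrite pi_cons_one|].
  rewrite pi_cons_two. destruct x as [|a x'] eqn:Ex.
  { unfold pi, pi_factor. simpl. lra. }
  rewrite <- Ex in *.
  assert (Hx : (2 <= size x + 1)%nat) by (subst x; rewrite size_cons; destruct a; simpl; lia).
  pose proof (growth_factor_pi_factor_le _ Hx). pose proof (growth_ge1 x).
  assert (0 <= 2 / INR (size x + 1)) by (apply Rdiv_le_0_compat; [lra|apply lt_0_INR; lia]).
  replace ((1 + 2 / INR (size x + 1)) * growth x * (pi_factor (size x + 1) * pi x) ^ 2)
    with ((1 + 2 / INR (size x + 1)) * pi_factor (size x + 1) ^ 2 * (growth x * pi x ^ 2))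
    by ring.
  apply Rle_trans with (1 * 3); [|lra].
  apply Rmult_le_compat; [|apply Rmult_le_pos; [lra|apply pow2_ge_0]|auto|auto].
  apply Rmult_le_pos; [lra|apply pow2_ge_0].
Qed.

Lemma pi_cons_le a x : pi (a :: x) <= pi x.
Proof.
  pose proof (pi_range x). destruct a; [now rewrite pi_cons_one; lra|].
  rewrite pi_cons_two. pose proof (pi_factor_range (size x + 1)). nra.
Qed.

Lemma growth_le_inv_pi_sq y : growth y <= 3 / pi y ^ 2.
Proof.
  pose proof (pi_range y). assert (0 < pi y ^ 2) by (apply pow_lt; lra).
  apply Rle_div_r; [lra|]. apply growth_pi_sq_le.
Qed.

Definition suffix_word (v : inf_word) (K : nat) : word := rev (map v (seq 0 K)).

Definition count_ones (v : inf_word) (K : nat) : nat :=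
  length (filter (fun j => is_one (v j)) (seq 0 K)).

Lemma suffix_word_S v K : suffix_word v (S K) = v K :: suffix_word v K.
Proof. unfold suffix_word. now rewrite seq_S, map_app, rev_app_distr. Qed.

Lemma size_suffix_word_ge v K : (K <= size (suffix_word v K))%nat.
Proof.
  induction K as [|K IH]; [simpl; lia|].
  rewrite suffix_word_S, size_cons. destruct (v K); simpl; lia.
Qed.

Lemma letterwise_cvg_suffix (vn : nat -> word) v : letterwise_cvg vn v ->
  forall K, exists N, forall n, (N <= n)%nat -> exists p, vn n = p ++ suffix_word v K.
Proof.
  intros H K. destruct (H K) as [N HN]. exists N. intros n Hn.
  destruct (HN n Hn) as [Hlen Hnth].
  exists (rev (skipn K (rev (vn n)))).
  rewrite <- (rev_involutive (vn n)) at 1. rewrite <- (firstn_skipn K (rev (vn n))) at 1.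
  rewrite rev_app_distr. unfold suffix_word. f_equal. f_equal.
  apply nth_ext with Two Two.
  - rewrite length_firstn, length_map, length_seq, length_rev. lia.
  - intros j Hj. rewrite length_firstn in Hj. rewrite nth_firstn.
    destruct (Nat.ltb_spec j K); [|lia]. rewrite Hnth by lia.
    rewrite nth_indep with (d' := v 0%nat) by (rewrite length_map, length_seq; lia).
    now rewrite map_nth, seq_nth by lia.
Qed.

Lemma pi_suffix_word_lim v : is_lim_seq (fun K => pi (suffix_word v K)) (pi_inf v).
Proof.
  assert (Hdecr : forall K, pi (suffix_word v (S K)) <= pi (suffix_word v K))
    by (intros K; rewrite suffix_word_S; apply pi_cons_le).
  destruct (ex_finite_lim_seq_decr _ 0 Hdecr) as [l Hl].
  { intros K. pose proof (pi_range (suffix_word v K)). lra. }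
  assert (Hl' : is_lim_seq (fun N => pi_of_gs (gs (map v (seq 0 N)) 0)) l).
  { apply (is_lim_seq_ext (fun K => pi (suffix_word v K))); [|exact Hl].
    intros K. unfold pi, suffix_word. now rewrite rev_involutive. }
  unfold pi_inf. now rewrite (is_lim_seq_unique _ _ Hl').
Qed.

Lemma pi_inf_le v K : pi_inf v <= pi (suffix_word v K).
Proof.
  apply (is_lim_seq_decr_compare (fun K => pi (suffix_word v K))); [apply pi_suffix_word_lim|].
  intros n. rewrite suffix_word_S. apply pi_cons_le.
Qed.

Lemma count_ones_S v K : count_ones v (S K) = (count_ones v K + Nat.b2n (is_one (v K)))%nat.
Proof.
  unfold count_ones. rewrite seq_S, filter_app, length_app. simpl.
  now destruct (is_one (v K)).
Qed.

Lemma count_ones_mono v K K' : (K <= K')%nat -> (count_ones v K <= count_ones v K')%nat.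
Proof. induction 1; [lia|]. rewrite count_ones_S. lia. Qed.

Lemma count_ones_le_e v p K : (count_ones v K <= e (p ++ suffix_word v K) v)%nat.
Proof.
  unfold e, suffix_word, count_ones. rewrite rev_app_distr, rev_involutive.
  generalize (rev p), 0%nat. intros l j. revert j.
  induction K as [|K IH]; intros j; simpl; [lia|].
  replace (letter_eqb (v j) (v j)) with true by (symmetry; now apply letter_eqb_eq).
  specialize (IH (S j)). destruct (is_one (v j)); simpl; lia.
Qed.

Lemma Qbar_suffix_count_le_length v k y : (Qbar_suffix_count v k y <= length y)%nat.
Proof. induction y as [|a y IH]; simpl; [lia|]. destruct (in_Qbar v k (a :: y)); simpl; lia. Qed.

Lemma Qbar_suffix_count_le v k p K : (k <= count_ones v K)%nat ->
  (Qbar_suffix_count v k (p ++ suffix_word v K) <= K)%nat.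
Proof.
  intros Hk. induction p as [|a p IH]; simpl.
  - pose proof (Qbar_suffix_count_le_length v k (suffix_word v K)).
    unfold suffix_word in *. rewrite length_rev, length_map, length_seq in *. lia.
  - replace (in_Qbar v k (a :: p ++ suffix_word v K)) with false; [simpl; lia|].
    symmetry. apply Nat.ltb_ge. pose proof (count_ones_le_e v (a :: p) K). simpl in *. lia.
Qed.

Lemma pi_sq_size_cons_two x : (1 <= size x)%nat ->
  pi (Two :: x) ^ 2 * INR (size (Two :: x)) <= pi x ^ 2 * INR (size x).
Proof.
  intros Hx. rewrite pi_cons_two, size_cons. unfold pi_factor.
  replace (Nat.ltb 1 (size x + 1)) with true by (symmetry; apply Nat.ltb_lt; lia).
  assert (Hs : 1 <= INR (size x)) by (apply (le_INR 1); lia).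
  rewrite !plus_INR. simpl digit. change (INR 2) with 2. change (INR 1) with 1.
  set (s := INR (size x)) in *.
  replace ((s + 1 - 1) / (s + 1) * pi x) with (s / (s + 1) * pi x) by (field; lra).
  apply Rmult_le_reg_r with ((s + 1) ^ 2); [nra|].
  replace ((s / (s + 1) * pi x) ^ 2 * (2 + s) * (s + 1) ^ 2) with (pi x ^ 2 * (s * (s * (s + 2))))
    by (field; lra).
  replace (pi x ^ 2 * s * (s + 1) ^ 2) with (pi x ^ 2 * (s * (s + 1) ^ 2)) by ring.
  apply Rmult_le_compat_l; [apply pow2_ge_0|nra].
Qed.

Lemma pi_sq_size_twos n y : (1 <= size y)%nat ->
  pi (repeat Two n ++ y) ^ 2 * INR (2 * n + size y) <= INR (size y).
Proof.
  intros Hy. induction n as [|n IH].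
  - simpl. pose proof (pi_range y). pose proof (pos_INR (size y)).
    assert (pi y ^ 2 <= 1) by nra. nra.
  - replace (2 * S n + size y)%nat with (size (repeat Two (S n) ++ y))
      by (rewrite size_app, size_repeat_two; lia).
    simpl repeat. rewrite <- app_comm_cons.
    eapply Rle_trans; [apply pi_sq_size_cons_two; rewrite size_app; lia|].
    now rewrite size_app, size_repeat_two.
Qed.

Lemma pi_inf_eventually_two v J : (forall j, (J <= j)%nat -> v j = Two) -> pi_inf v <= 0.
Proof.
  intros HJ. set (y := suffix_word v (S J)).
  assert (Hy : (1 <= size y)%nat) by (pose proof (size_suffix_word_ge v (S J)); unfold y; lia).
  assert (Hsuffix : forall n, suffix_word v (n + S J) = repeat Two n ++ y).
  { induction n as [|n IH]; [reflexivity|].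
    rewrite Nat.add_succ_l, suffix_word_S, IH, HJ by lia. reflexivity. }
  destruct (Rle_or_lt (pi_inf v) 0) as [|Hpos]; [assumption|exfalso].
  assert (Hp : 0 < pi_inf v ^ 2) by (apply pow_lt; lra).
  destruct (INR_unbounded (INR (size y) / pi_inf v ^ 2)) as [n Hn].
  apply Rlt_div_l in Hn; [|lra].
  assert (Hle : pi_inf v ^ 2 * INR (2 * n + size y) <= INR (size y)).
  { eapply Rle_trans; [|apply (pi_sq_size_twos n y Hy)]. apply Rmult_le_compat_r; [apply pos_INR|].
    rewrite <- Hsuffix. pose proof (pi_inf_le v (n + S J)). apply pow_incr; lra. }
  rewrite plus_INR, mult_INR in Hle. change (INR 2) with 2 in Hle.
  pose proof (pos_INR n). pose proof (pos_INR (size y)). nra.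
Qed.

Lemma pi_inf_pos_count_ones v k : 0 < pi_inf v -> exists K, (k <= count_ones v K)%nat.
Proof.
  intros Hpos. destruct (classic (exists J, forall j, (J <= j)%nat -> v j = Two)) as [[J HJ]|Hno].
  - pose proof (pi_inf_eventually_two v J HJ). lra.
  - induction k as [|k [K HK]]; [exists 0%nat; lia|].
    destruct (not_all_ex_not _ _ (not_ex_all_not _ _ Hno K)) as [j Hj].
    apply imply_to_and in Hj as [HKj Hj]. exists (S j).
    rewrite count_ones_S. pose proof (count_ones_mono v K j HKj).
    destruct (v j); simpl; [lia|contradiction].
Qed.

Fixpoint twos_prod (y : word) (s j : nat) : R :=
  match y with
  | [] => 1
  | One _ :: x => twos_prod x s j
  | Two :: x => (if Nat.leb s (size x) then 1 - INR j / INR (size x + 1) else 1) * twos_prod x s j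
  end.

Fixpoint twos_harm (y : word) (s : nat) : R :=
  match y with
  | [] => 0
  | One _ :: x => twos_harm x s
  | Two :: x => (if Nat.leb s (size x) then / INR (size x + 1) else 0) + twos_harm x s
  end.

Lemma pi_twos_prod y : pi y = twos_prod y 1 1.
Proof.
  induction y as [|[i|] x IH]; [reflexivity|now rewrite pi_cons_one|].
  rewrite pi_cons_two, IH. cbn [twos_prod]. f_equal. unfold pi_factor.
  destruct (Nat.ltb_spec 1 (size x + 1)), (Nat.leb_spec 1 (size x)); try lia; [|reflexivity].
  change (INR 1) with 1. field. apply not_0_INR. lia.
Qed.

Lemma twos_prod_short y s j : (size y <= s)%nat -> twos_prod y s j = 1.
Proof.
  induction y as [|[i|] x IH]; intros H; cbn [twos_prod]; [reflexivity| |];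
    rewrite size_cons in H; simpl digit in H; [apply IH; lia|].
  destruct (Nat.leb_spec s (size x)); [lia|]. rewrite IH by lia. lra.
Qed.

Lemma twos_prod_app p z s j : (s <= size z)%nat ->
  twos_prod (p ++ z) s j = twos_prod (p ++ z) (size z) j * twos_prod z s j.
Proof.
  intros Hs. induction p as [|[i|] p IH]; simpl; auto.
  - rewrite (twos_prod_short z (size z)) by lia. lra.
  - rewrite IH, size_app.
    destruct (Nat.leb_spec s (size p + size z)), (Nat.leb_spec (size z) (size p + size z)); try lia.
    ring.
Qed.

Lemma twos_prod_0 y s : twos_prod y s 0 = 1.
Proof.
  induction y as [|[i|] x IH]; simpl; auto. rewrite IH.
  destruct (Nat.leb s (size x)); [unfold Rdiv; rewrite Rmult_0_l|]; lra.
Qed.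

Lemma twos_prod_range y s j : (j <= s + 1)%nat -> 0 <= twos_prod y s j <= 1.
Proof.
  intros Hj. induction y as [|[i|] x IH]; simpl; [lra|auto|].
  destruct (Nat.leb_spec s (size x)); [|lra].
  assert (0 <= INR j / INR (size x + 1) <= 1).
  { split; [apply Rdiv_le_0_compat; [apply pos_INR|apply lt_0_INR; lia]|].
    apply (Rdiv_le_1 (INR j) (INR (size x + 1))); [apply lt_0_INR; lia|apply le_INR; lia]. }
  nra.
Qed.

Lemma inv_INR_succ_range n : 0 < / INR (n + 1) <= 1.
Proof.
  split; [apply Rinv_0_lt_compat, lt_0_INR; lia|].
  rewrite <- Rinv_1. apply Rinv_le_contravar; [lra|apply (le_INR 1); lia].
Qed.

Lemma twos_harm_nonneg y s : 0 <= twos_harm y s.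
Proof.
  induction y as [|[i|] x IH]; simpl; [lra|auto|].
  destruct (Nat.leb s (size x)); [|lra].
  pose proof (inv_INR_succ_range (size x)). lra.
Qed.

Lemma twos_prod1_harm_le y s : twos_prod y s 1 * (1 + twos_harm y s) <= 1.
Proof.
  induction y as [|[i|] x IH]; simpl; [lra|auto|].
  pose proof (twos_prod_range x s 1 ltac:(lia)). pose proof (twos_harm_nonneg x s).
  destruct (Nat.leb_spec s (size x)); [|lra].
  pose proof (inv_INR_succ_range (size x)) as Ht.
  unfold Rdiv. rewrite Rmult_1_l.
  set (t := / INR (size x + 1)) in *. set (q := twos_prod x s 1) in *.
  set (h := twos_harm x s) in *.
  replace ((1 - t) * q * (1 + (t + h))) with (q * ((1 - t) * (1 + (t + h)))) by ring.
  apply Rle_trans with (q * (1 + h)); [|lra].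
  apply Rmult_le_compat_l; nra.
Qed.

Lemma twos_harm_le y s : 0 < twos_prod y s 1 -> twos_harm y s <= / twos_prod y s 1.
Proof.
  intros Hpos. pose proof (twos_prod1_harm_le y s). pose proof (twos_harm_nonneg y s).
  apply (Rmult_le_reg_l (twos_prod y s 1)); [lra|]. rewrite Rinv_r by lra. nra.
Qed.

Lemma pow_one_sub_bound t j : 0 <= t <= 1 ->
  0 <= (1 - t) ^ j - (1 - INR j * t) <= INR j ^ 2 * t ^ 2.
Proof.
  intros Ht. induction j as [|j IH]; [simpl; lra|].
  rewrite S_INR. simpl pow.
  replace ((1 - t) * (1 - t) ^ j - (1 - (INR j + 1) * t))
    with ((1 - t) * ((1 - t) ^ j - (1 - INR j * t)) + INR j * t ^ 2) by ring.
  pose proof (pos_INR j). assert (0 <= INR j * t ^ 2) by (apply Rmult_le_pos; nra).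
  nra.
Qed.

Lemma pow_unit_interval x n : 0 <= x <= 1 -> 0 <= x ^ n <= 1.
Proof. intros Hx. split; [now apply pow_le|]. rewrite <- (pow1 n). now apply pow_incr. Qed.

Lemma Rabs_mult_sub_le a b c d : 0 <= a <= 1 -> 0 <= d <= 1 ->
  Rabs (a * c - b * d) <= Rabs (a - b) + Rabs (c - d).
Proof.
  intros Ha Hd. replace (a * c - b * d) with (a * (c - d) + (a - b) * d) by ring.
  eapply Rle_trans; [apply Rabs_triang|].
  rewrite !Rabs_mult, (Rabs_pos_eq a), (Rabs_pos_eq d) by lra.
  pose proof (Rabs_pos (c - d)). pose proof (Rabs_pos (a - b)). nra.
Qed.

Lemma twos_prod_pow_err y s j : (j <= s + 1)%nat ->
  Rabs (twos_prod y s j - twos_prod y s 1 ^ j) <= INR j ^ 2 / INR (s + 1) * twos_harm y s.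
Proof.
  (* A two at level g >= s + 1 contributes 1 - j t to the left and (1 - t)^j to the right,
     t = 1 / g; these differ by at most j^2 t^2 <= j^2 t / (s + 1). *)
  intros Hj. assert (Hs : 0 < INR (s + 1)) by (apply lt_0_INR; lia).
  set (c := INR j ^ 2 / INR (s + 1)).
  induction y as [|[i|] x IH]; cbn [twos_prod twos_harm];
    [rewrite pow1, Rminus_diag, Rabs_R0; lra|auto|].
  destruct (Nat.leb_spec s (size x)); [|now rewrite !Rmult_1_l, Rplus_0_l].
  set (t := / INR (size x + 1)).
  assert (Hts : 0 < t <= / INR (s + 1)).
  { split; [apply Rinv_0_lt_compat, lt_0_INR; lia|].
    apply Rinv_le_contravar; [lra|apply le_INR; lia]. }
  assert (Hjt : INR j * t <= 1).
  { apply Rle_trans with (INR j * / INR (s + 1)); [apply Rmult_le_compat_l; [apply pos_INR|lra]|].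
    apply (proj1 (Rdiv_le_1 (INR j) (INR (s + 1)) Hs)), le_INR. lia. }
  assert (Ht1 : t <= 1) by apply inv_INR_succ_range.
  replace (INR j / INR (size x + 1)) with (INR j * t) by reflexivity.
  replace (1 - INR 1 / INR (size x + 1)) with (1 - t) by (unfold t, Rdiv; simpl; ring).
  rewrite Rpow_mult_distr.
  pose proof (pow_one_sub_bound t j ltac:(lra)) as Hpow.
  pose proof (twos_prod_range x s j Hj). pose proof (twos_prod_range x s 1 ltac:(lia)).
  assert (0 <= INR j * t) by (apply Rmult_le_pos; [apply pos_INR|lra]).
  eapply Rle_trans; [apply Rabs_mult_sub_le; [lra|apply pow_unit_interval; lra]|].
  rewrite Rabs_minus_sym, (Rabs_pos_eq ((1 - t) ^ j - (1 - INR j * t))) by lra.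
  assert (INR j ^ 2 * t ^ 2 <= c * t).
  { unfold c, Rdiv.
    replace (INR j ^ 2 * / INR (s + 1) * t) with (INR j ^ 2 * t * / INR (s + 1)) by ring.
    replace (INR j ^ 2 * t ^ 2) with (INR j ^ 2 * t * t) by ring.
    apply Rmult_le_compat_l; [apply Rmult_le_pos; [apply pow2_ge_0|lra]|lra]. }
  lra.
Qed.

Lemma twos_prod_app_err p z s j : (j <= s)%nat -> (s <= size z)%nat ->
  0 < twos_prod (p ++ z) (size z) 1 ->
  Rabs (twos_prod (p ++ z) s j - twos_prod z s j * twos_prod (p ++ z) (size z) 1 ^ j)
  <= INR j ^ 2 / INR (size z + 1) / twos_prod (p ++ z) (size z) 1.
Proof.
  intros Hj Hs Hpos. rewrite (twos_prod_app p z s j Hs).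
  pose proof (twos_prod_range z s j ltac:(lia)).
  replace (twos_prod (p ++ z) (size z) j * twos_prod z s j
           - twos_prod z s j * twos_prod (p ++ z) (size z) 1 ^ j)
    with (twos_prod z s j * (twos_prod (p ++ z) (size z) j - twos_prod (p ++ z) (size z) 1 ^ j))
    by ring.
  rewrite Rabs_mult, Rabs_pos_eq by lra.
  apply Rle_trans with (1 * (INR j ^ 2 / INR (size z + 1) * twos_harm (p ++ z) (size z))).
  - apply Rmult_le_compat; [lra|apply Rabs_pos|lra|apply twos_prod_pow_err; lia].
  - rewrite Rmult_1_l. unfold Rdiv at 2. apply Rmult_le_compat_l.
    + apply Rdiv_le_0_compat; [apply pow2_ge_0|apply lt_0_INR; lia].
    + now apply twos_harm_le.
Qed.

Definition dr_ratio (r : nat) (u y : word) : R := INR (dr r u y) / INR (dr r [] y).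

Definition twos_prod_comb (c : list (R * nat)) (y : word) (s : nat) : R :=
  sumR (map (fun aj => fst aj * twos_prod y s (snd aj)) c).

Lemma twos_prod_comb_short c y s : (size y <= s)%nat -> twos_prod_comb c y s = sumR (map fst c).
Proof.
  intros H. apply sumR_map_ext_in. intros aj _. rewrite twos_prod_short by lia. lra.
Qed.

Lemma twos_prod_comb_cons a j c y s :
  twos_prod_comb ((a, j) :: c) y s = a * twos_prod y s j + twos_prod_comb c y s.
Proof. reflexivity. Qed.

(* Chosen so that a / (r (m - j)) * (g - m) / g + a / (r g) = a / (r (m - j)) * (1 - j / g),
   which makes the recursion for d(u, 2y) hold termwise ([twos_prod_comb_cons_two]). *)
Definition scale_coeffs (r m : nat) (c : list (R * nat)) : list (R * nat) :=
  map (fun aj => (fst aj / (INR r * (INR m - INR (snd aj))), snd aj)) c.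

Section Representation.

Variable r : nat.
Hypothesis r_pos : (0 < r)%nat.

Lemma dr_ratio_cons_one u i y : (size u <= size y)%nat ->
  dr_ratio r u (One i :: y) = dr_ratio r u y.
Proof.
  intros H. unfold dr_ratio. rewrite dr_cons_one, dr_nil_cons_one, word_eqb_size by (simpl; lia).
  now rewrite Nat.add_0_r.
Qed.

Lemma dr_ratio_cons_two a u y : valid_word r (a :: u) -> (size (a :: u) <= size y + 1)%nat ->
  dr_ratio r (a :: u) (Two :: y) =
  (INR (size y + 1) - INR (size (a :: u))) / INR (size y + 1) * dr_ratio r (a :: u) y
  + dr_ratio r u y / (INR r * INR (size y + 1)).
Proof.
  intros Hu Hs. unfold dr_ratio. rewrite dr_cons_two, dr_nil_cons_two by auto. simpl dr_tail.
  rewrite plus_INR, !mult_INR, minus_INR by lia.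
  pose proof (INR_dr_nil_pos r r_pos y). pose proof (lt_0_INR r r_pos).
  pose proof (lt_0_INR (size y + 1) ltac:(lia)). field. lra.
Qed.

Lemma twos_prod_comb_cons_two c m y s :
  (s <= size y)%nat -> (forall aj, In aj c -> (snd aj < m)%nat) ->
  twos_prod_comb (scale_coeffs r m c) (Two :: y) s =
  (INR (size y + 1) - INR m) / INR (size y + 1) * twos_prod_comb (scale_coeffs r m c) y s
  + twos_prod_comb c y s / (INR r * INR (size y + 1)).
Proof.
  intros Hs Hc. pose proof (lt_0_INR r r_pos). pose proof (lt_0_INR (size y + 1) ltac:(lia)).
  induction c as [|[a j] c IH]; [unfold twos_prod_comb; simpl; field; lra|].
  change (scale_coeffs r m ((a, j) :: c))
    with ((a / (INR r * (INR m - INR j)), j) :: scale_coeffs r m c).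
  rewrite !twos_prod_comb_cons, IH by (intros; apply Hc; now right).
  cbn [twos_prod fst snd]. destruct (Nat.leb_spec s (size y)); [|lia].
  assert (INR j < INR m) by (apply lt_INR, (Hc (a, j)); now left). field. lra.
Qed.

Lemma dr_ratio_cons_twos_prod_comb a u x0 c :
  valid_word r (a :: u) -> (size (a :: u) <= size x0)%nat ->
  (forall aj, In aj c -> (snd aj < size (a :: u))%nat) ->
  (forall p, dr_ratio r u (p ++ x0) = twos_prod_comb c (p ++ x0) (size x0)) ->
  let m := size (a :: u) in
  let c' := scale_coeffs r m c in
  let b := dr_ratio r (a :: u) x0 - sumR (map fst c') in
  forall p, dr_ratio r (a :: u) (p ++ x0) = twos_prod_comb ((b, m) :: c') (p ++ x0) (size x0).
Proof.
  intros Hu Hs Hc Hrep m c' b p.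
  (* b is fixed by the case p = [], the other coefficients by the recursion in p. *)
  induction p as [|[i|] p IHp]; simpl app.
  - rewrite twos_prod_comb_cons, twos_prod_short, twos_prod_comb_short by lia. unfold b. lra.
  - rewrite dr_ratio_cons_one by (rewrite size_app; lia). exact IHp.
  - set (y := p ++ x0) in *.
    assert (Hy : (size x0 <= size y)%nat) by (unfold y; rewrite size_app; lia).
    rewrite dr_ratio_cons_two, IHp by (auto; lia). unfold y. rewrite Hrep. fold y m.
    rewrite !twos_prod_comb_cons. unfold c'. rewrite twos_prod_comb_cons_two by auto.
    cbn [twos_prod]. destruct (Nat.leb_spec (size x0) (size y)); [|lia].
    pose proof (lt_0_INR (size y + 1) ltac:(lia)). pose proof (lt_0_INR r r_pos). field. lra.
Qed.

Lemma dr_ratio_twos_prod_comb u x0 : valid_word r u -> (size u <= size x0)%nat ->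
  exists c, (forall aj, In aj c -> (snd aj <= size u)%nat) /\
    forall p, dr_ratio r u (p ++ x0) = twos_prod_comb c (p ++ x0) (size x0).
Proof.
  induction u as [|a u IH]; intros Hu Hs.
  - exists [(1, 0%nat)]. split; [intros aj [<-|[]]; simpl; lia|].
    intros p. unfold dr_ratio, twos_prod_comb. simpl. rewrite twos_prod_0.
    pose proof (INR_dr_nil_pos r r_pos (p ++ x0)). field. lra.
  - assert (Hm : (size u < size (a :: u))%nat) by (rewrite size_cons; destruct a; simpl; lia).
    destruct IH as [c [Hc Hrep]]; [intros b Hb; apply Hu; now right|lia|].
    assert (Hc' : forall aj, In aj c -> (snd aj < size (a :: u))%nat)
      by (intros aj Hin; specialize (Hc aj Hin); lia).
    eexists. split; [|exact (dr_ratio_cons_twos_prod_comb a u x0 c Hu Hs Hc' Hrep)].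
    intros aj [<-|Hin]; [simpl; lia|].
    unfold scale_coeffs in Hin. apply in_map_iff in Hin as [aj' [<- Hin]]. simpl.
    specialize (Hc' aj' Hin). rewrite size_cons in Hc'. lia.
Qed.

End Representation.

Section Convergence.

Variables (vn : nat -> word) (v : inf_word) (beta : R).
Hypothesis vn_cvg : letterwise_cvg vn v.
Hypothesis pi_inf_pos : 0 < pi_inf v.
Hypothesis beta_pos : 0 < beta.
Hypothesis pi_vn_lim : is_lim_seq (fun n => pi (vn n)) (beta * pi_inf v).

Lemma twos_prod1_suffix_lim K : (0 < K)%nat ->
  is_lim_seq (fun n => twos_prod (vn n) (size (suffix_word v K)) 1)
    (beta * pi_inf v / pi (suffix_word v K)).
Proof.
  intros HK. pose proof (size_suffix_word_ge v K). pose proof (pi_range (suffix_word v K)).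
  destruct (letterwise_cvg_suffix vn v vn_cvg K) as [N HN].
  apply is_lim_seq_ext_loc with (fun n => pi (vn n) / pi (suffix_word v K)).
  - exists N. intros n Hn. destruct (HN n Hn) as [p ->].
    rewrite (pi_twos_prod (p ++ _)), (twos_prod_app p _ 1 1), <- pi_twos_prod by lia.
    field. lra.
  - apply is_lim_seq_div'; [exact pi_vn_lim|apply is_lim_seq_const|lra].
Qed.

Lemma twos_prod_cvg s j : (j <= s)%nat -> ex_finite_lim_seq (fun n => twos_prod (vn n) s j).
Proof.
  (* Approximate by twos_prod z s j * rho_n ^ j for a long suffix z of v, with
     rho_n = twos_prod (vn n) (size z) 1 -> beta pi(v) / pi(z) >= 2 c. *)
  intros Hj. apply ex_finite_lim_seq_approx. intros eps Heps.
  set (c := beta * pi_inf v / 2). assert (Hc : 0 < c) by (unfold c; nra).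
  destruct (INR_unbounded (INR j ^ 2 / (c * eps) + INR s)) as [K HK].
  assert (HjK : INR j ^ 2 / (c * eps) <= INR K) by (pose proof (pos_INR s); lra).
  assert (HsK : (s < K)%nat).
  { apply INR_lt. enough (0 <= INR j ^ 2 / (c * eps)) by lra.
    apply Rdiv_le_0_compat; [apply pow2_ge_0|nra]. }
  set (z := suffix_word v K). set (S := size z).
  assert (HSK : (K <= S)%nat) by apply size_suffix_word_ge.
  pose proof (pi_range z).
  pose proof (twos_prod1_suffix_lim K ltac:(lia)) as Hrho. fold z S in Hrho.
  assert (HL : 2 * c <= beta * pi_inf v / pi z).
  { unfold c. replace (2 * (beta * pi_inf v / 2)) with (beta * pi_inf v / 1) by field.
    apply Rmult_le_compat_l; [nra|]. apply Rinv_le_contravar; lra. }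
  exists (fun n => twos_prod z s j * twos_prod (vn n) S 1 ^ j). split.
  { eexists. apply (is_lim_seq_scal_l _ _ ((beta * pi_inf v / pi z) ^ j)), is_lim_seq_pow, Hrho. }
  destruct (letterwise_cvg_suffix vn v vn_cvg K) as [N1 HN1].
  destruct (is_lim_seq_close _ _ Hrho c Hc) as [N2 HN2].
  exists (N1 + N2)%nat. intros n Hn.
  destruct (HN1 n ltac:(lia)) as [p Hp]. fold z in Hp. cbv beta. rewrite Hp.
  specialize (HN2 n ltac:(lia)). rewrite Hp in HN2. apply Rabs_def2 in HN2 as [_ Hrho_n].
  eapply Rle_trans; [apply twos_prod_app_err; [lia|lia|fold S; lra]|]. fold S.
  rewrite <- Rdiv_mult_distr.
  apply Rle_div_l; [apply Rmult_lt_0_compat; [apply lt_0_INR; lia|lra]|].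
  apply Rle_div_l in HjK; [|nra].
  assert (c <= twos_prod (p ++ z) S 1) by lra.
  assert (INR K <= INR (S + 1)) by (apply le_INR; lia).
  apply Rle_trans with (INR (S + 1) * (c * eps));
    [apply (Rle_trans _ _ _ HjK), Rmult_le_compat_r; nra|].
  rewrite (Rmult_comm eps), Rmult_assoc. apply Rmult_le_compat_l; [apply pos_INR|nra].
Qed.

Lemma twos_prod_comb_cvg c s : (forall aj, In aj c -> (snd aj <= s)%nat) ->
  ex_finite_lim_seq (fun n => twos_prod_comb c (vn n) s).
Proof.
  induction c as [|aj c IH]; intros H.
  - exists 0. apply is_lim_seq_const.
  - destruct (twos_prod_cvg s (snd aj) (H aj (or_introl eq_refl))) as [l1 H1].
    destruct IH as [l2 H2]; [intros; apply H; now right|].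
    exists (fst aj * l1 + l2). apply is_lim_seq_plus'; [|exact H2].
    apply (is_lim_seq_scal_l _ (fst aj) l1), H1.
Qed.

Lemma mu_at_cvg r u : (0 < r)%nat -> valid_word r u ->
  is_lim_seq (fun n => mu_at r (vn n) u) (mu_along r vn u).
Proof.
  intros Hr Hu. set (x0 := suffix_word v (S (size u))).
  assert (Hx0 : (S (size u) <= size x0)%nat) by apply size_suffix_word_ge.
  destruct (dr_ratio_twos_prod_comb r Hr u x0 Hu ltac:(lia)) as [c [Hc Hrep]].
  destruct (twos_prod_comb_cvg c (size x0)) as [l Hl].
  { intros aj Hin. specialize (Hc aj Hin). lia. }
  destruct (letterwise_cvg_suffix vn v vn_cvg (S (size u))) as [N HN].
  assert (Hmu : is_lim_seq (fun n => mu_at r (vn n) u) (INR (dr r [] u) * l)).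
  { apply is_lim_seq_ext_loc with (fun n => INR (dr r [] u) * twos_prod_comb c (vn n) (size x0)).
    - exists N. intros n Hn. destruct (HN n Hn) as [p Hp]. fold x0 in Hp.
      rewrite Hp, <- Hrep. unfold mu_at, dr_ratio, Rdiv. ring.
    - apply (is_lim_seq_scal_l _ _ l), Hl. }
  unfold mu_along.
  change (fun n => INR (dr r [] u) * INR (dr r u (vn n)) / INR (dr r [] (vn n)))
    with (fun n => mu_at r (vn n) u).
  now rewrite (is_lim_seq_unique _ _ Hmu).
Qed.

Lemma Qbar_mass_lim r k m : (0 < r)%nat ->
  is_lim_seq (fun n => Qbar_mass r v k (vn n) m)
    (sumR (map (mu_along r vn) (filter (in_Qbar v k) (words_of_size r m)))).
Proof.
  intros Hr. apply sumR_lim. intros u Hu. apply filter_In in Hu as [Hu _].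
  apply mu_at_cvg; eauto using words_of_size_valid.
Qed.

Lemma Qbar_mass_total_eventually_bounded r k : (0 < r)%nat ->
  exists C N, forall n, (N <= n)%nat -> Qbar_mass_total r v k (vn n) <= C.
Proof.
  intros Hr. set (c := beta * pi_inf v / 2). assert (Hc : 0 < c) by (unfold c; nra).
  destruct (pi_inf_pos_count_ones v k pi_inf_pos) as [K HK].
  destruct (letterwise_cvg_suffix vn v vn_cvg K) as [N1 HN1].
  destruct (is_lim_seq_close _ _ pi_vn_lim c Hc) as [N2 HN2].
  exists (3 / c ^ 2 * (1 + INR K)), (N1 + N2)%nat. intros n Hn.
  eapply Rle_trans; [apply Qbar_mass_total_le_growth; auto|].
  assert (Hpin : c <= pi (vn n)).
  { specialize (HN2 n ltac:(lia)). apply Rabs_def2 in HN2. unfold c in *. lra. }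
  assert (Hcount : (Qbar_suffix_count v k (vn n) <= K)%nat).
  { destruct (HN1 n ltac:(lia)) as [p ->]. now apply Qbar_suffix_count_le. }
  pose proof (growth_ge1 (vn n)). pose proof (pos_INR (Qbar_suffix_count v k (vn n))).
  apply Rmult_le_compat; [lra|lra| |apply Rplus_le_compat_l, le_INR, Hcount].
  eapply Rle_trans; [apply growth_le_inv_pi_sq|].
  apply Rmult_le_compat_l; [lra|]. apply Rinv_le_contravar; [apply pow_lt; lra|].
  apply pow_incr; lra.
Qed.

End Convergence.

Theorem mainTheorem3 (r : nat) (v : inf_word) (beta : R) (k : nat)
  (vn : nat -> word) :
  (2 <= r)%nat ->
  valid_inf_word r v ->
  0 < pi_inf v ->
  0 < beta <= 1 ->
  (forall n, valid_word r (vn n)) ->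
  letterwise_cvg vn v ->
  is_lim_seq (fun n => pi (vn n)) (beta * pi_inf v) ->
  is_lim_seq
    (fun m => sumR (map (mu_along r vn)
                 (filter (fun w => Nat.ltb (e w v) k) (words_of_size r m))))
    0.
Proof.
  intros Hr _ Hpi [Hbeta _] _ Hcv Hlim.
  assert (Hr0 : (0 < r)%nat) by lia.
  set (h := fun m => sumR (map (mu_along r vn) (filter (in_Qbar v k) (words_of_size r m)))).
  change (is_lim_seq h 0).
  pose proof (Qbar_mass_lim vn v beta Hcv Hpi Hbeta Hlim r k) as Hmass.
  destruct (Qbar_mass_total_eventually_bounded vn v beta Hcv Hpi Hbeta Hlim r k Hr0) as [C [N HC]].
  apply (is_lim_seq_terms_bounded_sums h C).
  - intros m. apply (is_lim_seq_le_loc (fun _ => 0) (fun n => Qbar_mass r v k (vn n) m) 0 (h m));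
      [exists 0%nat; intros; apply Qbar_mass_nonneg; lia|apply is_lim_seq_const|now apply Hmass].
  - intros M.
    apply (is_lim_seq_le_loc (fun n => sum_below (Qbar_mass r v k (vn n)) M) (fun _ => C)
      (sum_below h M) C);
      [exists N; intros n Hn|apply sum_below_lim; intros; now apply Hmass|apply is_lim_seq_const].
    eapply Rle_trans; [apply sum_below_Qbar_mass_le; lia|auto].
Qed.
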